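(* Let $r,u\in\mathcal{X}$ be in different orbits with $u=(u_1,\dots, u_n)$, $r=(r_1,\dots, r_n)$, $\mathbb{F}_q(r_1)=\mathbb{F}_{q^m}$ and $r\approx u$. Then there exists $G\in \mathrm{TA}_n(\mathbb{F}_q)$ such that $G(r)\not\approx G(u)$.
   Context: Fix $m$, a prime power $q$, $n\geq 3$. $\Delta=\mathrm{Gal}(\mathbb{F}_{q^m}:\mathbb{F}_q)$ acts coordinatewise on $\mathbb{F}_{q^m}^n$; $[v]$ denotes the $\Delta$-orbit of $v$ (for vectors or scalars), and $\mathcal{X}$ is the union of orbits of size $m$ in $\mathbb{F}_{q^m}^n$. $u\approx v$ (weakly conjugate) means $[u_i]=[v_i]$ for all $1\le i\le n$. $\mathrm{TA}_n(\mathbb{F}_q)$ is the tame automorphism group generated by invertible affine maps and triangular maps $(a_1X_1+f_1,\dots,a_nX_n+f_n)$, $a_i\in\mathbb{F}_q^*$, $f_i\in\mathbb{F}_q[X_{i+1},\dots,X_n]$. *)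

From HB Require Import structures.
From mathcomp Require Import all_boot all_order all_algebra all_field.
From mathcomp Require Import mpoly.
Set Implicit Arguments. Unset Strict Implicit. Unset Printing Implicit Defensive.
Import GRing.Theory.
Local Open Scope ring_scope.

(* L plays the role of F_{q^m}; the subfield F_q is {x | x^q = x}. *)
Section Defs.
Variable (L : finFieldType) (q n : nat).

Definition inFq (x : L) : bool := x ^+ q == x.

Definition isGal (s : {ffun L -> L}) : bool :=
  [&& [forall x, forall y, s (x + y) == s x + s y],
      [forall x, forall y, s (x * y) == s x * s y],
      s 1 == 1, injectiveb s & [forall x, inFq x ==> (s x == x)]].

Definition Delta : {set {ffun L -> L}} := [set s | isGal s].

Definition orbS (x : L) : {set L} := [set (s : {ffun L -> L}) x | s in Delta].
Definition orbV (v : 'rV[L]_n) : {set 'rV[L]_n} :=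
  [set map_mx (fun x => (s : {ffun L -> L}) x) v | s in Delta].

Definition inX (m : nat) (v : 'rV[L]_n) : Prop := #|orbV v| = m.

Definition wconj (u v : 'rV[L]_n) : Prop :=
  forall i : 'I_n, orbS (u 0 i) = orbS (v 0 i).

(* F_q(x) = F_{q^m}: the smallest subfield containing F_q and x is all of L *)
Definition subfield_closed (S : {set L}) : Prop :=
  [/\ 0 \in S, 1 \in S,
      forall a b, a \in S -> b \in S -> a + b \in S,
      forall a, a \in S -> - a \in S &
      (forall a b, a \in S -> b \in S -> a * b \in S) /\
      (forall a, a \in S -> a^-1 \in S)].

Definition generates (x : L) : Prop :=
  forall S : {set L}, subfield_closed S -> (forall y, inFq y -> y \in S) ->
    x \in S -> S = setT.

(* affine invertible maps over F_q (row-vector convention v |-> v A + b) *)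
Definition affine_map (A : 'M[L]_n) (b : 'rV[L]_n) (v : 'rV[L]_n) : 'rV[L]_n :=
  v *m A + b.

Definition tri_map (a : 'I_n -> L) (f : 'I_n -> {mpoly L[n]}) (v : 'rV[L]_n)
  : 'rV[L]_n := \row_i (a i * v 0 i + (f i).@[fun j => v 0 j]).

Definition tri_poly (i : 'I_n) (p : {mpoly L[n]}) : Prop :=
  (forall mo, inFq (p@_mo)) /\
  (forall mo, mo \in msupp p -> forall j : 'I_n, (j <= i)%N -> mo j = 0%N).

Inductive tame : ('rV[L]_n -> 'rV[L]_n) -> Prop :=
| tame_aff (A : 'M[L]_n) (b : 'rV[L]_n) : A \in unitmx -> (forall i j, inFq (A i j)) ->
    (forall j, inFq (b 0 j)) -> tame (affine_map A b)
| tame_tri (a : 'I_n -> L) (f : 'I_n -> {mpoly L[n]}) : (forall i, a i != 0 /\ inFq (a i)) ->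
    (forall i, tri_poly i (f i)) -> tame (tri_map a f)
| tame_comp G H : tame G -> tame H -> tame (G \o H)
| tame_inv G H : tame G -> cancel G H -> cancel H G -> tame H.

End Defs.

From HB Require Import structures.
From mathcomp Require Import all_boot all_order all_algebra all_field.
From mathcomp Require Import fingroup perm boolp mpoly.

(* Since r_1 generates F_{q^m} over F_q, every element of F_{q^m} is P(r_1) for
   a polynomial P over F_q.  Let sigma be the automorphism with u_1 = sigma(r_1).
   The orbits of r and u have the same size m and the orbit of sigma(r) is
   contained in that of r, so u != sigma(r): some u_i differs from sigma(r_i),
   and i != 1.  Writing -r_i = P(r_1), the tame map adding P(X_1) to the i-th
   coordinate (a triangular map, after swapping coordinates if necessary) sends
   r_i to 0 and u_i to u_i + P(sigma(r_1)) = u_i - sigma(r_i) != 0.  The orbit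
   of 0 is {0}, so the images are not weakly conjugate. *)

Set Implicit Arguments.
Unset Strict Implicit.
Unset Printing Implicit Defensive.
Import GRing.Theory.
Local Open Scope ring_scope.

Section SubfieldFq.
Variables (L : finFieldType) (q : nat).
Hypothesis qchar : [pchar L].-nat q.

Lemma inFq0 : inFq q (0 : L).
Proof. by case/andP: qchar; rewrite /inFq expr0n => /gtn_eqF->. Qed.

Lemma inFq1 : inFq q (1 : L).
Proof. by rewrite /inFq expr1n. Qed.

Lemma inFqD (x y : L) : inFq q x -> inFq q y -> inFq q (x + y).
Proof. by rewrite /inFq (exprDn_pchar _ _ qchar) => /eqP-> /eqP->. Qed.

Lemma inFqN (x : L) : inFq q x -> inFq q (- x).
Proof. by rewrite /inFq (exprNn_pchar _ qchar) => /eqP->. Qed.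

Lemma inFqM (x y : L) : inFq q x -> inFq q y -> inFq q (x * y).
Proof. by rewrite /inFq exprMn => /eqP-> /eqP->. Qed.

Lemma inFq_sum (I : finType) (F : I -> L) :
  (forall i, inFq q (F i)) -> inFq q (\sum_i F i).
Proof. by move=> FqF; apply: (big_ind (inFq q)) => //; [exact: inFq0 | exact: inFqD]. Qed.

Lemma inFq_nat (b : bool) : inFq q (b%:R : L).
Proof. by case: b; [exact: inFq1 | exact: inFq0]. Qed.

Definition polyFq (P : {poly L}) := forall i, inFq q P`_i.

Lemma polyFqC c : inFq q c -> polyFq c%:P.
Proof. by move=> Fqc i; rewrite coefC; case: eqP => _ //; exact: inFq0. Qed.

Lemma polyFqX : polyFq 'X.
Proof. by move=> i; rewrite coefX; case: eqP => _; [exact: inFq1 | exact: inFq0]. Qed.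

Lemma polyFqD P Q : polyFq P -> polyFq Q -> polyFq (P + Q).
Proof. by move=> FqP FqQ i; rewrite coefD; exact: inFqD. Qed.

Lemma polyFqN P : polyFq P -> polyFq (- P).
Proof. by move=> FqP i; rewrite coefN; exact: inFqN. Qed.

Lemma polyFqM P Q : polyFq P -> polyFq Q -> polyFq (P * Q).
Proof.
by move=> FqP FqQ i; rewrite coefM; apply: inFq_sum => j; exact: inFqM.
Qed.

Lemma polyFqXn P k : polyFq P -> polyFq (P ^+ k).
Proof.
move=> FqP; elim: k => [|k IHk]; first exact/polyFqC/inFq1.
by rewrite exprS; exact: polyFqM.
Qed.

End SubfieldFq.

Section GaloisAction.
Variables (L : finFieldType) (q : nat).

Lemma isGal_id : isGal q [ffun x : L => x].
Proof.
apply/and5P; split.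
- by apply/forallP => x; apply/forallP => y; rewrite !ffunE.
- by apply/forallP => x; apply/forallP => y; rewrite !ffunE.
- by rewrite ffunE.
- by apply/injectiveP => x y; rewrite !ffunE.
- by apply/forallP => x; apply/implyP => _; rewrite ffunE.
Qed.

Lemma isGalP (s : {ffun L -> L}) : isGal q s ->
  [/\ {morph s : x y / x + y}, {morph s : x y / x * y}, s 1 = 1,
      injective s & forall x, inFq q x -> s x = x].
Proof.
case/and5P => /forallP sD /forallP sM /eqP s1 /injectiveP s_inj /forallP sFq.
split=> // [x y | x y | x /(implyP (sFq x)) /eqP //].
- exact/eqP/(forallP (sD x)).
- exact/eqP/(forallP (sM x)).
Qed.

Lemma isGal_comp (s t : {ffun L -> L}) : isGal q s -> isGal q t ->
  isGal q [ffun x => t (s x)].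
Proof.
move=> /isGalP [sD sM s1 s_inj sFq] /isGalP [tD tM t1 t_inj tFq].
apply/and5P; split.
- by apply/forallP => x; apply/forallP => y; rewrite !ffunE sD tD.
- by apply/forallP => x; apply/forallP => y; rewrite !ffunE sM tM.
- by rewrite ffunE s1 t1.
- by apply/injectiveP => x y; rewrite !ffunE => /t_inj /s_inj.
- by apply/forallP => x; apply/implyP => Fqx; rewrite ffunE sFq // tFq.
Qed.

Section GaloisMorphism.
Variables (s : {ffun L -> L}) (Gs : isGal q s).

Lemma gal_nmod_morphism : nmod_morphism s.
Proof.
have [sD _ _ _ _] := isGalP Gs; split=> //.
by apply: (@addrI _ (s 0)); rewrite -sD !addr0.
Qed.

Lemma gal_monoid_morphism : monoid_morphism s.
Proof. by have [_ sM s1 _ _] := isGalP Gs. Qed.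

End GaloisMorphism.

Definition gal_rmorph (s : {ffun L -> L}) (Gs : isGal q s) : {rmorphism L -> L} :=
  let f : L -> L := s in
  HB.pack f (GRing.isNmodMorphism.Build L L f (gal_nmod_morphism Gs))
    (GRing.isMonoidMorphism.Build L L f (gal_monoid_morphism Gs)).

Lemma gal_rmorphE (s : {ffun L -> L}) (Gs : isGal q s) x : gal_rmorph Gs x = s x.
Proof. by []. Qed.

Lemma gal_horner (s : {ffun L -> L}) (Gs : isGal q s) P x :
  polyFq q P -> s P.[x] = P.[s x].
Proof.
move=> FqP; rewrite -!(gal_rmorphE Gs) -horner_map map_poly_id //.
move=> _ /(nthP 0) [i _ <-].
by have [_ _ _ _ sFq] := isGalP Gs; exact: sFq.
Qed.

Lemma mem_orbS (x : L) : x \in orbS q x.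
Proof.
apply/imsetP; exists [ffun y => y]; last by rewrite ffunE.
by rewrite inE; exact: isGal_id.
Qed.

Lemma orbS0 : orbS q (0 : L) = [set 0].
Proof.
apply/setP => y; rewrite inE; apply/imsetP/eqP => [[s] | ->]; last first.
  by exists [ffun x => x]; rewrite ?inE ?ffunE //; exact: isGal_id.
by rewrite inE => Gs ->; rewrite -gal_rmorphE rmorph0.
Qed.

Lemma orbV_map_sub n (s : {ffun L -> L}) (Gs : isGal q s) (v : 'rV[L]_n) :
  orbV q (map_mx s v) \subset orbV q v.
Proof.
apply/subsetP => w /imsetP [t]; rewrite inE => Gt ->.
apply/imsetP; exists [ffun x => t (s x)]; first by rewrite inE; exact: isGal_comp.
by apply/matrixP => i j; rewrite !mxE ffunE.
Qed.

End GaloisAction.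

Lemma invf_expcard (L : finFieldType) (x : L) : x != 0 -> x^-1 = x ^+ #|L|.-2.
Proof.
move=> x_nz; apply: (mulfI x_nz); rewrite mulfV // -exprS.
apply: (mulfI x_nz); rewrite mulr1 -exprS !prednK ?expf_card //.
  exact: ltn_trans (finNzRing_gt1 L).
by rewrite -ltnS prednK ?finNzRing_gt1 // ltnW ?finNzRing_gt1.
Qed.

Section GeneratorRepresentation.
Variables (L : finFieldType) (q : nat).
Hypothesis qchar : [pchar L].-nat q.

Lemma generates_horner (r0 : L) : generates q r0 ->
  forall y, exists2 P, polyFq q P & P.[r0] = y.
Proof.
pose S := [set y | `[< exists2 P, polyFq q P & P.[r0] = y >]].
have inS y : reflect (exists2 P, polyFq q P & P.[r0] = y) (y \in S).
  by rewrite inE; exact: asboolP.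
move=> gen_r0; suff ST : S = setT by move=> y; apply/inS; rewrite ST inE.
apply: gen_r0.
- split.
  + by apply/inS; exists 0; [exact/polyFqC/inFq0 | rewrite horner0].
  + by apply/inS; exists 1; [exact/polyFqC/inFq1 | rewrite hornerC].
  + move=> _ _ /inS [P FqP <-] /inS [Q FqQ <-]; apply/inS.
    by exists (P + Q); [exact: polyFqD | rewrite hornerD].
  + move=> _ /inS [P FqP <-]; apply/inS.
    by exists (- P); [exact: polyFqN | rewrite hornerN].
  split=> [_ _ /inS [P FqP <-] /inS [Q FqQ <-] | _ /inS [P FqP <-]]; apply/inS.
    by exists (P * Q); [exact: polyFqM | rewrite hornerM].
  have [P0|nz] := eqVneq P.[r0] 0; first by rewrite P0 invr0; exists P.
  by exists (P ^+ #|L|.-2); [exact: polyFqXn | rewrite horner_exp invf_expcard].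
- by move=> c Fqc; apply/inS; exists c%:P; [exact: polyFqC | rewrite hornerC].
- by apply/inS; exists 'X; [exact: polyFqX | rewrite hornerX].
Qed.

End GeneratorRepresentation.

Section Shears.
Variables (L : finFieldType) (q n : nat).
Hypothesis qchar : [pchar L].-nat q.

Definition mpoly_of_poly (P : {poly L}) (j : 'I_n) : {mpoly L[n]} :=
  \sum_(i < size P) P`_i *: 'X_j ^+ i.

Lemma meval_mpoly_of_poly P j (v : 'I_n -> L) : (mpoly_of_poly P j).@[v] = P.[v j].
Proof.
rewrite raddf_sum horner_coef; apply: eq_bigr => i _.
by rewrite /= mevalZ rmorphXn /= mevalXU.
Qed.

Lemma mcoeff_mpoly_of_poly P j m :
  (mpoly_of_poly P j)@_m = \sum_(i < size P) P`_i * ((U_(j) *+ i)%MM == m)%:R.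
Proof. by rewrite raddf_sum; apply: eq_bigr => i _; rewrite /= mcoeffZ mcoeffXn. Qed.

Lemma tri_poly_mpoly_of_poly P (i j : 'I_n) :
  polyFq q P -> (i < j)%N -> tri_poly q i (mpoly_of_poly P j).
Proof.
move=> FqP lt_ij; split=> [m | m].
  rewrite mcoeff_mpoly_of_poly; apply: (inFq_sum qchar) => k.
  by apply: inFqM; [exact: FqP | exact: inFq_nat].
rewrite mcoeff_msupp mcoeff_mpoly_of_poly => m_supp k le_ki.
apply/eqP; apply: contraNT m_supp => mk_nz; apply/eqP/big1 => l _.
suff /negbTE-> : (U_(j) *+ l)%MM != m by rewrite mulr0.
apply: contra mk_nz => /eqP <-; rewrite mulmnE mnm1E.
have /negbTE-> // : j != k by apply: contraTneq le_ki => <-; rewrite -ltnNge.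
Qed.

Definition shear (i j : 'I_n) (P : {poly L}) : 'rV[L]_n -> 'rV[L]_n :=
  tri_map (fun _ => 1) (fun k => if k == i then mpoly_of_poly P j else 0).

Lemma shear_coord i j P (v : 'rV[L]_n) : shear i j P v 0 i = v 0 i + P.[v 0 j].
Proof. by rewrite mxE eqxx mul1r meval_mpoly_of_poly. Qed.

Lemma tame_shear (i j : 'I_n) P : polyFq q P -> (i < j)%N -> tame q (shear i j P).
Proof.
move=> FqP lt_ij; apply: tame_tri => [k | k].
  by split; [exact: oner_neq0 | exact: inFq1].
case: eqP => [-> | _]; first exact: tri_poly_mpoly_of_poly.
split=> [m | m]; first by rewrite mcoeff0; exact: inFq0.
by rewrite msupp0.
Qed.

Lemma tame_perm (s : 'S_n) : tame q (affine_map (perm_mx s : 'M[L]_n) 0).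
Proof.
apply: tame_aff => [|i j|j]; first exact: unitmx_perm.
  by rewrite !mxE; exact: inFq_nat.
by rewrite mxE; exact: inFq0.
Qed.

Lemma affine_perm_coord (s : 'S_n) (v : 'rV[L]_n) j :
  affine_map (perm_mx s : 'M[L]_n) 0 v 0 j = v 0 (s^-1 j)%g.
Proof. by rewrite /affine_map addr0 -[s in perm_mx s]invgK -col_permE mxE. Qed.

Lemma tame_add_poly (i j : 'I_n) (P : {poly L}) : polyFq q P -> i != j ->
  exists2 G, tame q G & exists k, forall v, G v 0 k = v 0 i + P.[v 0 j].
Proof.
move=> FqP; case: (ltngtP i j) => [lt_ij | lt_ji | /val_inj->]; last by rewrite eqxx.
  by move=> _; exists (shear i j P); [exact: tame_shear | exists i => v; exact: shear_coord].
move=> _; exists (shear j i P \o affine_map (perm_mx (tperm i j)) 0).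
  by apply: tame_comp; [exact: tame_shear | exact: tame_perm].
by exists j => v; rewrite /= shear_coord !affine_perm_coord tpermV tpermR tpermL.
Qed.

End Shears.

Theorem mainTheorem11 (L : finFieldType) (q m n : nat)
  (Hq : exists p k : nat, prime p /\ (0 < k)%N /\ q = (p ^ k)%N)
  (Hm : (0 < m)%N) (HL : #|L| = (q ^ m)%N) (Hn : (3 <= n)%N)
  (r u : 'rV[L]_n) :
  inX q m r -> inX q m u -> orbV q r != orbV q u ->
  (forall i : 'I_n, nat_of_ord i = 0%N -> generates q (r 0 i)) ->
  wconj q r u ->
  exists G : 'rV[L]_n -> 'rV[L]_n, tame q G /\ ~ wconj q (G r) (G u).
Proof.
move=> Xr Xu r_u_orbits gen_r r_approx_u.
have qchar : [pchar L].-nat q.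
  have [p [k [p_pr [_ q_pk]]]] := Hq.
  have pchar : p \in [pchar L].
    by apply: (card_finPcharP (n := k * m)); rewrite // HL q_pk expnM.
  by rewrite q_pk pnatX pnatE ?pchar.
pose i1 : 'I_n := Ordinal (leq_trans (isT : (1 <= 3)%N) Hn).
have [s Gs u1] : exists2 s, isGal q s & u 0 i1 = s (r 0 i1).
  by have := mem_orbS q (u 0 i1); rewrite -r_approx_u => /imsetP [s]; rewrite inE; exists s.
have [i0 u_i0] : exists i0, u 0 i0 != s (r 0 i0).
  apply/existsP; apply: contraR r_u_orbits => /existsPn u_eq.
  have u_map : u = map_mx s r by apply/rowP => i; rewrite mxE; apply/eqP/negbNE/u_eq.
  by rewrite eq_sym eqEcard {1}u_map orbV_map_sub //= Xr Xu.
have i0_i1 : i0 != i1 by apply: contraNneq u_i0 => ->; rewrite u1.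
have [P FqP P_r1] := generates_horner qchar (gen_r i1 erefl) (- r 0 i0).
have [G tameG [k Gk]] := tame_add_poly qchar FqP i0_i1.
have Gr_k : G r 0 k = 0 by rewrite Gk P_r1 subrr.
have Gu_k : G u 0 k = u 0 i0 - s (r 0 i0).
  by rewrite Gk u1 -(gal_horner Gs) // P_r1 -(gal_rmorphE Gs) rmorphN.
exists G; split=> // /(_ k); rewrite Gr_k Gu_k orbS0 => /setP/(_ (G u 0 k)).
by rewrite Gu_k mem_orbS inE subr_eq0 (negbTE u_i0).
Qed.
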